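(* Let $k\ge1$, $j\ge0$ be integers, and let $h$ have a continuous derivative of order $k+j$ on an interval $(a,b)$. Then for all $a<u<v<b$, \[ \int_u^v h^{(k+j)}(t)\,(t-u)^{k-1}(v-t)^{j}\,dt=(v-u)^{k+j}\,{}_jM_{k-1}(u,v). \]
   Context: For a function $h$ set $M(u,v)=\frac{h(v)-h(u)}{v-u}$ for $u\ne v$, and ${}_iM_j(u,v)=\frac{\partial^{i+j}}{\partial u^i\partial v^j}M(u,v)$ (partial derivatives $i$ times in $u$ and $j$ times in $v$). *)

From Stdlib Require Import Reals Lra Lia.
Open Scope R_scope.

(* Divided difference M(u,v) = (h v - h u)/(v - u), meaningful for u <> v. *)
Definition M (h : R -> R) (u v : R) : R := (h v - h u) / (v - u).

From Stdlib Require Import Reals Lra Lia.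
From Coquelicot Require Import Coquelicot.
Open Scope R_scope.

(* Writing D n for h^(n), the candidate for  d^i/du^i d^l/dv^l M  is
     partial_M i l u v = (v-u)^-(i+l+1) * int_u^v D(i+l+1)(t) (t-u)^l (v-t)^i dt,
   so the integral identity of the theorem holds by definition, and the content
   lies in three facts:
   - partial_M 0 0 = M                                 (fundamental theorem),
   - d/dv partial_M 0 l = partial_M 0 (l+1)            (partial_M_derive_v),
   - d/du partial_M i l = partial_M (i+1) l            (partial_M_derive_u).
   Both derivative computations are the quotient rule combined with one
   integration by parts.  For the u-derivative one also needs the derivative
   of  x |-> int_x^v f(t) (t-x)^l dt,  a Leibniz rule proved by induction on l. *)

Section OpenIntervalCalculus.

Variables a b : R.

Definition cont_on (f : R -> R) : Prop := forall x, a < x < b -> continuous f x.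

Lemma cont_on_plus (f g : R -> R) :
  cont_on f -> cont_on g -> cont_on (fun t => f t + g t).
Proof. intros Hf Hg x Hx; apply (continuous_plus f g); auto. Qed.

Lemma cont_on_opp (f : R -> R) : cont_on f -> cont_on (fun t => - f t).
Proof. intros Hf x Hx; apply (continuous_opp f); auto. Qed.

Lemma cont_on_mult (f g : R -> R) :
  cont_on f -> cont_on g -> cont_on (fun t => f t * g t).
Proof. intros Hf Hg x Hx; apply (continuous_mult f g); auto. Qed.

Lemma cont_on_id : cont_on (fun t => t).
Proof. intros x _; apply continuous_id. Qed.

Lemma cont_on_const (c : R) : cont_on (fun _ => c).
Proof. intros x _; apply continuous_const. Qed.

Lemma is_derive_shift_pow (c : R) (m : nat) (x : R) :
  is_derive (fun t => (t - c) ^ m) x (INR m * (x - c) ^ pred m).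
Proof. auto_derive; [auto | unfold Rminus; ring]. Qed.

Lemma is_derive_refl_pow (c : R) (m : nat) (x : R) :
  is_derive (fun t => (c - t) ^ m) x (- (INR m * (c - x) ^ pred m)).
Proof. auto_derive; [auto | unfold Rminus; ring]. Qed.

Lemma cont_on_shift_pow (c : R) (m : nat) : cont_on (fun t => (t - c) ^ m).
Proof.
  intros x _; apply (ex_derive_continuous (fun t => (t - c) ^ m)).
  eexists; apply is_derive_shift_pow.
Qed.

Lemma cont_on_refl_pow (c : R) (m : nat) : cont_on (fun t => (c - t) ^ m).
Proof.
  intros x _; apply (ex_derive_continuous (fun t => (c - t) ^ m)).
  eexists; apply is_derive_refl_pow.
Qed.

Local Hint Resolve cont_on_plus cont_on_opp cont_on_mult cont_on_id cont_on_const
  cont_on_shift_pow cont_on_refl_pow : core.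

Lemma cont_on_of_derive (F f : R -> R) :
  (forall x, a < x < b -> is_derive F x (f x)) -> cont_on F.
Proof. intros HF x Hx; apply (ex_derive_continuous F); eexists; apply HF, Hx. Qed.

Lemma is_derive_eq (F : R -> R) (x l l' : R) : is_derive F x l -> l = l' -> is_derive F x l'.
Proof. intros H <-; exact H. Qed.

Lemma locally_open_interval (x : R) : a < x < b -> locally x (fun y => a < y < b).
Proof. intros Hx; apply (locally_interval _ x a b); simpl; tauto. Qed.

Lemma ex_RInt_cont_on (f : R -> R) (u v : R) :
  cont_on f -> a < u < b -> a < v < b -> ex_RInt f u v.
Proof.
  intros Hf Hu Hv; apply (@ex_RInt_continuous R_CompleteNormedModule); intros z Hz.
  apply Hf; unfold Rmin, Rmax in Hz; destruct Rle_dec; lra.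
Qed.

Lemma RInt_ext_eq (f g : R -> R) (u v : R) :
  (forall t, f t = g t) -> RInt f u v = RInt g u v.
Proof. intros Hfg; apply RInt_ext; intros; apply Hfg. Qed.

Lemma RInt_scal_on (f : R -> R) (c u v : R) :
  cont_on f -> a < u < b -> a < v < b -> RInt (fun t => c * f t) u v = c * RInt f u v.
Proof. intros Hf Hu Hv; apply (@RInt_scal R_CompleteNormedModule); auto using ex_RInt_cont_on. Qed.

Lemma RInt_lin (f g : R -> R) (c u v : R) :
  cont_on f -> cont_on g -> a < u < b -> a < v < b ->
  RInt (fun t => f t + c * g t) u v = RInt f u v + c * RInt g u v.
Proof.
  intros Hf Hg Hu Hv.
  rewrite (@RInt_plus R_CompleteNormedModule), RInt_scal_on; auto using ex_RInt_cont_on.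
Qed.

Lemma RInt_derive_upper (f : R -> R) (u v : R) :
  cont_on f -> a < u < b -> a < v < b -> is_derive (fun y => RInt f u y) v (f v).
Proof.
  intros Hf Hu Hv; apply (@is_derive_RInt R_NormedModule) with (a := u); [|apply Hf, Hv].
  eapply filter_imp; [|apply locally_open_interval, Hv].
  intros y Hy; apply (@RInt_correct R_CompleteNormedModule), ex_RInt_cont_on; auto.
Qed.

Lemma RInt_derive_lower (f : R -> R) (u v : R) :
  cont_on f -> a < u < b -> a < v < b -> is_derive (fun x => RInt f x v) u (- f u).
Proof.
  intros Hf Hu Hv; apply (@is_derive_RInt' R_NormedModule) with (b := v); [|apply Hf, Hu].
  eapply filter_imp; [|apply locally_open_interval, Hu].
  intros y Hy; apply (@RInt_correct R_CompleteNormedModule), ex_RInt_cont_on; auto.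
Qed.

Lemma RInt_FTC (F f : R -> R) (u v : R) :
  (forall x, a < x < b -> is_derive F x (f x)) -> cont_on f ->
  a < u < b -> a < v < b -> RInt f u v = F v - F u.
Proof.
  intros HF Hf Hu Hv; apply is_RInt_unique, (is_RInt_derive F f);
    intros x Hx; [apply HF | apply Hf]; unfold Rmin, Rmax in Hx; destruct Rle_dec; lra.
Qed.

Lemma RInt_by_parts (F f G g : R -> R) (u v : R) :
  (forall x, a < x < b -> is_derive F x (f x)) ->
  (forall x, a < x < b -> is_derive G x (g x)) ->
  cont_on f -> cont_on g -> a < u < b -> a < v < b ->
  RInt (fun t => f t * G t) u v = F v * G v - F u * G u - RInt (fun t => F t * g t) u v.
Proof.
  intros HF HG Hf Hg Hu Hv.
  assert (HF' : cont_on F) by (apply (cont_on_of_derive F f), HF).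
  assert (HG' : cont_on G) by (apply (cont_on_of_derive G g), HG).
  assert (Hprod : RInt (fun t => f t * G t + 1 * (F t * g t)) u v = F v * G v - F u * G u).
  { apply (RInt_FTC (fun t => F t * G t)); auto.
    intros x Hx; eapply is_derive_eq.
    - apply is_derive_Reals, (derivable_pt_lim_mult F G); apply is_derive_Reals; auto.
    - ring. }
  rewrite RInt_lin in Hprod; auto; lra.
Qed.

(* Leibniz rule for a polynomially weighted integral with moving lower bound:
     d/dx int_x^v f(t) (t-x)^l dt = - f(x) (x-x)^l - l int_x^v f(t) (t-x)^(l-1) dt,
   where the boundary term (x-x)^l is 1 for l = 0 and vanishes otherwise.  The
   induction step uses (t-x)^(l+1) = t (t-x)^l - x (t-x)^l. *)
Lemma RInt_derive_lower_weighted (l : nat) : forall (f : R -> R) (u v : R),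
  cont_on f -> a < u < b -> a < v < b ->
  is_derive (fun x => RInt (fun t => f t * (t - x) ^ l) x v) u
    (- (f u * (u - u) ^ l) - INR l * RInt (fun t => f t * (t - u) ^ pred l) u v).
Proof.
  induction l as [|l IH]; intros f u v Hf Hu Hv.
  - eapply is_derive_eq.
    + apply (is_derive_ext (fun x => RInt f x v)); [|apply RInt_derive_lower; auto].
      intros x; apply RInt_ext_eq; intros; simpl; ring.
    + simpl; ring.
  - set (G := fun x => RInt (fun t => f t * (t - x) ^ l) x v).
    assert (Hsplit : forall x, a < x < b ->
      RInt (fun t => f t * t * (t - x) ^ l) x v + (- x) * G x
      = RInt (fun t => f t * (t - x) ^ S l) x v).
    { intros x Hx; unfold G; rewrite <- RInt_lin; auto.
      apply RInt_ext_eq; intros; simpl; ring. }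
    eapply is_derive_ext_loc.
    { eapply filter_imp; [|apply locally_open_interval, Hu]; exact Hsplit. }
    eapply is_derive_eq.
    { apply is_derive_Reals, derivable_pt_lim_plus; apply is_derive_Reals.
      - apply (IH (fun t => f t * t)); auto.
      - apply is_derive_Reals, (derivable_pt_lim_mult (fun x => - x) G);
          apply is_derive_Reals; [auto_derive; auto | apply IH; auto]. }
    assert (Hcomb : INR l * (RInt (fun t => f t * t * (t - u) ^ pred l) u v
                    + (- u) * RInt (fun t => f t * (t - u) ^ pred l) u v) = INR l * G u).
    { destruct l as [|m]; [simpl; ring|].
      unfold G; f_equal; rewrite <- RInt_lin; auto.
      apply RInt_ext_eq; intros; simpl; ring. }
    replace (u - u) with 0 by ring; rewrite S_INR; simpl pow.
    fold (G u); lra.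
Qed.

End OpenIntervalCalculus.

Section DividedDifferencePartials.

(* D n plays the role of h^(n): D n has derivative D (n+1) on (a,b) for n < K,
   and D K is continuous there. *)
Variables (a b : R) (K : nat) (D : nat -> R -> R).
Hypothesis HD : forall n x, (n < K)%nat -> a < x < b -> is_derive (D n) x (D (S n) x).
Hypothesis HDK : cont_on a b (D K).

Local Hint Resolve cont_on_plus cont_on_opp cont_on_mult cont_on_id cont_on_const
  cont_on_shift_pow cont_on_refl_pow : core.

Lemma D_cont_on (n : nat) : (n <= K)%nat -> cont_on a b (D n).
Proof.
  intros Hn; destruct (Nat.eq_dec n K) as [->|Hne]; [exact HDK|].
  apply (cont_on_of_derive a b (D n) (D (S n))); intros; apply HD; auto; lia.
Qed.

(* The integral representation of  d^i/du^i d^l/dv^l M(u,v). *)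
Definition partial_M (i l : nat) (u v : R) : R :=
  RInt (fun t => D (i + l + 1) t * (t - u) ^ l * (v - t) ^ i) u v / (v - u) ^ (i + l + 1).

Lemma partial_M_zero (u v : R) :
  (1 <= K)%nat -> a < u < b -> a < v < b -> u <> v ->
  partial_M 0 0 u v = (D 0 v - D 0 u) / (v - u).
Proof.
  intros HK Hu Hv Huv; unfold partial_M; simpl (0 + 0 + 1)%nat.
  rewrite (RInt_ext_eq _ (D 1)) by (intros; simpl; ring).
  rewrite (RInt_FTC a b (D 0) (D 1) u v (fun x Hx => HD 0 x HK Hx) (D_cont_on 1 HK) Hu Hv).
  field; lra.
Qed.

(* Differentiating partial_M 0 l in v: with I(y) = int_u^y D(l+1)(t) (t-u)^l dt,
   the quotient rule reduces the claim to the integration by parts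
     int_u^v D(l+2) (t-u)^(l+1) = D(l+1)(v) (v-u)^(l+1) - (l+1) I(v). *)
Lemma partial_M_derive_v (l : nat) (u v : R) :
  (l + 2 <= K)%nat -> a < u < b -> a < v < b -> u <> v ->
  is_derive (fun y => partial_M 0 l u y) v (partial_M 0 (S l) u v).
Proof.
  intros HK Hu Hv Huv; unfold partial_M.
  replace (0 + l + 1)%nat with (S l) by lia; replace (0 + S l + 1)%nat with (S (S l)) by lia.
  set (I := fun y => RInt (fun t => D (S l) t * (t - u) ^ l) u y).
  assert (HI : cont_on a b (fun t => D (S l) t * (t - u) ^ l))
    by (apply cont_on_mult; auto; apply D_cont_on; lia).
  assert (Hparts : RInt (fun t => D (S (S l)) t * (t - u) ^ S l * (v - t) ^ 0) u v
                   = D (S l) v * (v - u) ^ S l - INR (S l) * I v).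
  { rewrite (RInt_ext_eq _ (fun t => D (S (S l)) t * (t - u) ^ S l)) by (intros; simpl; ring).
    rewrite (RInt_by_parts a b (D (S l)) (D (S (S l))) (fun t => (t - u) ^ S l)
               (fun t => INR (S l) * (t - u) ^ l) u v
               (fun x Hx => HD (S l) x ltac:(lia) Hx) (fun x _ => is_derive_shift_pow u (S l) x)
               (D_cont_on (S (S l)) ltac:(lia)) ltac:(auto) Hu Hv).
    rewrite (RInt_ext_eq _ (fun t => INR (S l) * (D (S l) t * (t - u) ^ l))) by (intros; ring).
    rewrite (RInt_scal_on a b); auto; unfold I; simpl; ring. }
  eapply is_derive_eq.
  - apply (is_derive_ext (fun y => I y / (y - u) ^ S l)).
    { intros y; f_equal; apply RInt_ext_eq; intros; simpl; ring. }
    apply is_derive_div; [apply (RInt_derive_upper a b); auto | apply is_derive_shift_pow |].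
    apply pow_nonzero; lra.
  - rewrite Hparts; simpl pred.
    assert (Hp : (v - u) ^ l <> 0) by (apply pow_nonzero; lra).
    simpl pow; field; split; auto; lra.
Qed.

(* The integration by parts behind the u-derivative: integrating D(n+1) against
   (t-u)^l (v-t)^(i+1) and splitting (v-t) = (v-u) - (t-u) gives the numerator
   of the quotient rule applied to partial_M i l (for n = i+l+1). *)
Lemma weighted_by_parts (n i l : nat) (u v : R) :
  (n < K)%nat -> a < u < b -> a < v < b ->
  (RInt (fun t => D (S n) t * (t - u) ^ l * (v - t) ^ S i) u v : R)
  = - (D n u * (v - u) ^ i * (u - u) ^ l) * (v - u)
    - INR l * (v - u) * RInt (fun t => D n t * (v - t) ^ i * (t - u) ^ pred l) u v
    + INR (l + S i) * RInt (fun t => D n t * (v - t) ^ i * (t - u) ^ l) u v.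
Proof.
  intros Hn Hu Hv.
  assert (Hn' : cont_on a b (D n)) by (apply D_cont_on; lia).
  set (g := fun t => INR l * (t - u) ^ pred l * (v - t) ^ S i
                     + (t - u) ^ l * - (INR (S i) * (v - t) ^ i)).
  assert (Hg : forall x, a < x < b -> is_derive (fun t => (t - u) ^ l * (v - t) ^ S i) x (g x)).
  { intros x _; apply is_derive_Reals, (derivable_pt_lim_mult (fun t => (t - u) ^ l));
      apply is_derive_Reals; [apply is_derive_shift_pow | apply is_derive_refl_pow]. }
  rewrite (RInt_ext_eq _ (fun t => D (S n) t * ((t - u) ^ l * (v - t) ^ S i))) by (intros; ring).
  rewrite (RInt_by_parts a b (D n) (D (S n)) _ g u v (fun x Hx => HD n x Hn Hx) Hg
             (D_cont_on (S n) ltac:(lia)) ltac:(unfold g; auto) Hu Hv).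
  rewrite (RInt_ext_eq _ (fun t => INR l * (v - u) * (D n t * (v - t) ^ i * (t - u) ^ pred l)
                              + (- INR (l + S i)) * (D n t * (v - t) ^ i * (t - u) ^ l))).
  2:{ intros t; unfold g; rewrite plus_INR.
      destruct l as [|m]; [simpl; ring|]. rewrite S_INR; simpl pred; simpl pow; ring. }
  rewrite (RInt_lin a b), (RInt_scal_on a b); auto.
  replace (v - v) with 0 by ring; simpl pow; ring.
Qed.

Lemma partial_M_derive_u (i l : nat) (u v : R) :
  (i + l + 2 <= K)%nat -> a < u < b -> a < v < b -> u <> v ->
  is_derive (fun x => partial_M i l x v) u (partial_M (S i) l u v).
Proof.
  intros HK Hu Hv Huv; unfold partial_M.
  replace (S i + l + 1)%nat with (S (i + l + 1)) by lia.
  set (n := (i + l + 1)%nat).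
  set (f := fun t => D n t * (v - t) ^ i).
  set (J := fun x => RInt (fun t => f t * (t - x) ^ l) x v).
  assert (Hf : cont_on a b f) by (unfold f; apply cont_on_mult; auto; apply D_cont_on; lia).
  eapply is_derive_eq.
  - apply (is_derive_ext (fun x => J x / (v - x) ^ n)).
    { intros x; f_equal; apply RInt_ext_eq; intros; unfold f; ring. }
    apply is_derive_div; [apply (RInt_derive_lower_weighted a b); auto | apply is_derive_refl_pow |].
    apply pow_nonzero; lra.
  - rewrite weighted_by_parts by (auto; unfold n; lia).
    replace (l + S i)%nat with n by (unfold n; lia).
    unfold J, f; cbv beta.
    replace n with (S (i + l)) by (unfold n; lia).
    assert (Hp : (v - u) ^ (i + l) <> 0) by (apply pow_nonzero; lra).
    simpl pred; simpl pow; field; split; auto; lra.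
Qed.

End DividedDifferencePartials.

Theorem mainTheorem7 (k j : nat) (hk : (1 <= k)%nat) (a b : R)
  (h : R -> R) (D : nat -> R -> R)
  (hD0 : forall x, a < x < b -> D 0%nat x = h x)
  (hD : forall (n : nat) (x : R), (n < k + j)%nat -> a < x < b ->
          derivable_pt_lim (D n) x (D (S n) x))
  (hcont : forall x, a < x < b -> continuity_pt (D (k + j)%nat) x) :
  exists N : nat -> nat -> R -> R -> R,
    (forall u v, a < u < v /\ v < b -> N 0%nat 0%nat u v = M h u v) /\
    (forall (l : nat) u v, (l < k - 1)%nat -> a < u < v /\ v < b ->
       derivable_pt_lim (fun y => N 0%nat l u y) v (N 0%nat (S l) u v)) /\
    (forall (i : nat) u v, (i < j)%nat -> a < u < v /\ v < b ->
       derivable_pt_lim (fun x => N i (k - 1)%nat x v) u (N (S i) (k - 1)%nat u v)) /\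
    (forall u v, a < u < v /\ v < b ->
       exists pr : Riemann_integrable
                     (fun t => D (k + j)%nat t * (t - u) ^ (k - 1) * (v - t) ^ j) u v,
         RiemannInt pr = (v - u) ^ (k + j) * N j (k - 1)%nat u v).
Proof.
  assert (HD : forall n x, (n < k + j)%nat -> a < x < b -> is_derive (D n) x (D (S n) x))
    by (intros; apply is_derive_Reals, hD; auto).
  assert (HDK : cont_on a b (D (k + j)%nat))
    by (intros x Hx; apply continuity_pt_filterlim, hcont, Hx).
  exists (partial_M D); split; [|split; [|split]].
  - intros u v [[Hu Huv] Hv].
    rewrite (partial_M_zero a b (k + j) D HD HDK) by (lia || lra).
    unfold M; rewrite !hD0 by lra; reflexivity.
  - intros l u v Hl [[Hu Huv] Hv].
    apply is_derive_Reals, (partial_M_derive_v a b (k + j) D HD HDK); lia || lra.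
  - intros i u v Hi [[Hu Huv] Hv].
    apply is_derive_Reals, (partial_M_derive_u a b (k + j) D HD HDK); lia || lra.
  - intros u v [[Hu Huv] Hv].
    assert (Hint : ex_RInt (fun t => D (k + j)%nat t * (t - u) ^ (k - 1) * (v - t) ^ j) u v).
    { apply (ex_RInt_cont_on a b); try lra.
      apply cont_on_mult; [apply cont_on_mult|]; auto using cont_on_shift_pow, cont_on_refl_pow. }
    exists (ex_RInt_Reals_0 _ _ _ Hint); rewrite <- RInt_Reals; unfold partial_M.
    replace (j + (k - 1) + 1)%nat with (k + j)%nat by lia.
    symmetry; field; apply pow_nonzero; lra.
Qed.
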